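(* Every cofibration in $\mathbf{Bigpd}$ has the left lifting property with respect to every trivial fibration: given morphisms $(F,\phi):\mathcal A\to\mathcal B$, $(K,\kappa):\mathcal A\to\mathcal D$, $(G,\gamma):\mathcal B\to\mathcal C$, $(H,\eta):\mathcal D\to\mathcal C$ with $(G,\gamma)\circ(F,\phi)=(H,\eta)\circ(K,\kappa)$, $K$ a cofibration and $G$ a trivial fibration, there exists a morphism $(L,\lambda):\mathcal D\to\mathcal B$ with $(L,\lambda)\circ(K,\kappa)=(F,\phi)$ and $(G,\gamma)\circ(L,\lambda)=(H,\eta)$.
   Context: A bigroupoid $\mathcal B$ consists of: a set $\mathcal B_0$ of 0-cells; for each $A,B\in\mathcal B_0$ a groupoid $\mathcal B(A,B)$ whose objects are 1-cells and whose arrows are 2-cells; composition functors $*$; identity 1-cells $1_A$; inversion functors $(-)^*:\mathcal B(A,B)\to\mathcal B(B,A)$; and natural isomorphisms $\mathbf a:(h*g)*f\Rightarrow h*(g*f)$, $\mathbf l:1_B*f\Rightarrow f$, $\mathbf r:f*1_A\Rightarrow f$, $\mathbf e:f^**f\Rightarrow 1_A$, $\mathbf i:1_B\Rightarrow f*f^*$, such that the pentagon for $\mathbf a$ commutes, $(\mathrm{id}*\mathbf l)\circ\mathbf a=\mathbf r*\mathrm{id}$, and $\mathbf r_f\circ(\mathrm{id}*\mathbf e_f)\circ\mathbf a\circ(\mathbf i_f*\mathrm{id})=\mathbf l_f$. A morphism $(F,\phi):\mathcal A\to\mathcal B$ consists of a function on 0-cells, functors $F_{A,A'}:\mathcal A(A,A')\to\mathcal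 B(FA,FA')$ and natural isomorphisms $\phi_{g,f}:Fg*Ff\Rightarrow F(g*f)$, $\phi_A:1_{FA}\Rightarrow F1_A$, $\phi_f:(Ff)^*\Rightarrow F(f^* )$ satisfying $F\mathbf a\circ\phi\circ(\phi*\mathrm{id})=\phi\circ(\mathrm{id}*\phi)\circ\mathbf a$, $F\mathbf r\circ\phi\circ(\mathrm{id}*\phi_A)=\mathbf r$, $F\mathbf l\circ\phi\circ(\phi_B*\mathrm{id})=\mathbf l$, $F\mathbf e\circ\phi\circ(\phi_f*\mathrm{id})=\phi_A\circ\mathbf e$, $F\mathbf i\circ\phi_B=\phi\circ(\mathrm{id}*\phi_f)\circ\mathbf i$; composition is $(G,\gamma)\circ(F,\phi)=(GF,G\phi\circ\gamma F)$. Fibration: (1) for every 0-cell $A'$ of $\mathcal A$ and 1-cell $b:B\to FA'$ there is $a:A\to A'$ with $FA=B$, $Fa=b$; (2) for every 1-cell $a'$ and 2-cell $\beta:b\Rightarrow Fa'$ there is $\alpha:a\Rightarrow a'$ with $Fa=b$, $F\alpha=\beta$. Cofibration: injective on 0-cells and each $F_{A,A'}$ injective on objects. Weak equivalence: every 0-cell $B$ of $\mathcal B$ admits a 1-cell $B\to FA'$ for some 0-cell $A'$, and each $F_{A,A'}$ is an equivalence of categories. A trivial fibration is a fibration that is a weak equivalence. *)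

Set Implicit Arguments.
Unset Strict Implicit.

Record GroupoidData := {
  gobj : Type;
  garr : gobj -> gobj -> Type;
  gid : forall x, garr x x;
  gcomp : forall x y z, garr y z -> garr x y -> garr x z;  (* gcomp g f = g o f *)
  ginv : forall x y, garr x y -> garr y x }.

Arguments gobj : clear implicits.
Arguments garr {g} x y.
Arguments gid {g} x.
Arguments gcomp {g x y z} _ _.
Arguments ginv {g x y} _.

Notation "g ⊙ f" := (gcomp g f) (at level 40, left associativity).

Record IsGroupoid (G : GroupoidData) : Prop := {
  gcomp_assoc : forall (x y z w : gobj G) (h : garr z w) (g : garr y z) (f : garr x y),
      h ⊙ (g ⊙ f) = (h ⊙ g) ⊙ f;
  gid_l : forall (x y : gobj G) (f : garr x y), gid y ⊙ f = f;
  gid_r : forall (x y : gobj G) (f : garr x y), f ⊙ gid x = f;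
  ginv_l : forall (x y : gobj G) (f : garr x y), ginv f ⊙ f = gid x;
  ginv_r : forall (x y : gobj G) (f : garr x y), f ⊙ ginv f = gid y }.

Record Groupoid := { gdata :> GroupoidData; gaxioms : IsGroupoid gdata }.

(** An equivalence of categories between groupoids: a functor (F1,F2) admitting
    a functor (P1,P2) in the other direction and natural isomorphisms
    id => P o F and F o P => id (in a groupoid every natural transformation is
    a natural isomorphism). *)
Definition IsEquivOfCats (G H : Groupoid) (F1 : gobj G -> gobj H)
  (F2 : forall a b : gobj G, garr a b -> garr (F1 a) (F1 b)) : Prop :=
  exists (P1 : gobj H -> gobj G)
         (P2 : forall a b : gobj H, garr a b -> garr (P1 a) (P1 b)),
    (forall b : gobj H, P2 b b (gid b) = gid (P1 b)) /\
    (forall (b b' b'' : gobj H) (β : garr b b') (β' : garr b' b''),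
        P2 b b'' (β' ⊙ β) = P2 b' b'' β' ⊙ P2 b b' β) /\
    exists (eta : forall a : gobj G, garr a (P1 (F1 a)))
           (eps : forall b : gobj H, garr (F1 (P1 b)) b),
      (forall (a a' : gobj G) (θ : garr a a'),
          eta a' ⊙ θ = P2 _ _ (F2 a a' θ) ⊙ eta a) /\
      (forall (b b' : gobj H) (β : garr b b'),
          eps b' ⊙ F2 _ _ (P2 b b' β) = β ⊙ eps b).

Arguments IsEquivOfCats {G H} F1 F2.

Record BigroupoidData := {
  bob : Type;
  bhom : bob -> bob -> Groupoid;
  hc1 : forall A B C, gobj (bhom B C) -> gobj (bhom A B) -> gobj (bhom A C);
  hc2 : forall A B C (g g' : gobj (bhom B C)) (f f' : gobj (bhom A B)),
      garr g g' -> garr f f' -> garr (hc1 g f) (hc1 g' f');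
  id1 : forall A, gobj (bhom A A);
  inv1 : forall A B, gobj (bhom A B) -> gobj (bhom B A);
  inv2 : forall A B (f f' : gobj (bhom A B)), garr f f' -> garr (inv1 f) (inv1 f');
  asc : forall A B C D (h : gobj (bhom C D)) (g : gobj (bhom B C)) (f : gobj (bhom A B)),
      garr (hc1 (hc1 h g) f) (hc1 h (hc1 g f));
  lu : forall A B (f : gobj (bhom A B)), garr (hc1 (id1 B) f) f;
  ru : forall A B (f : gobj (bhom A B)), garr (hc1 f (id1 A)) f;
  ev : forall A B (f : gobj (bhom A B)), garr (hc1 (inv1 f) f) (id1 A);
  co : forall A B (f : gobj (bhom A B)), garr (id1 B) (hc1 f (inv1 f)) }.

Arguments bhom {b} _ _.
Arguments hc1 {b A B C} _ _.
Arguments hc2 {b A B C g g' f f'} _ _.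
Arguments id1 {b} A.
Arguments inv1 {b A B} _.
Arguments inv2 {b A B f f'} _.
Arguments asc {b A B C D} h g f.
Arguments lu {b A B} f.
Arguments ru {b A B} f.
Arguments ev {b A B} f.
Arguments co {b A B} f.

Record IsBigroupoid (X : BigroupoidData) : Prop := {
  hc2_id : forall (A B C : bob X) (g : gobj (bhom B C)) (f : gobj (bhom A B)),
      hc2 (gid g) (gid f) = gid (hc1 g f);
  hc2_comp : forall (A B C : bob X) (g g' g'' : gobj (bhom B C)) (f f' f'' : gobj (bhom A B))
      (θ : garr g g') (θ' : garr g' g'') (ψ : garr f f') (ψ' : garr f' f''),
      hc2 (θ' ⊙ θ) (ψ' ⊙ ψ) = hc2 θ' ψ' ⊙ hc2 θ ψ;
  inv2_id : forall (A B : bob X) (f : gobj (bhom A B)), inv2 (gid f) = gid (inv1 f);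
  inv2_comp : forall (A B : bob X) (f f' f'' : gobj (bhom A B))
      (θ : garr f f') (θ' : garr f' f''), inv2 (θ' ⊙ θ) = inv2 θ' ⊙ inv2 θ;
  asc_nat : forall (A B C D : bob X) (h h' : gobj (bhom C D)) (g g' : gobj (bhom B C))
      (f f' : gobj (bhom A B)) (χ : garr h h') (ψ : garr g g') (θ : garr f f'),
      asc h' g' f' ⊙ hc2 (hc2 χ ψ) θ = hc2 χ (hc2 ψ θ) ⊙ asc h g f;
  lu_nat : forall (A B : bob X) (f f' : gobj (bhom A B)) (θ : garr f f'),
      lu f' ⊙ hc2 (gid (id1 B)) θ = θ ⊙ lu f;
  ru_nat : forall (A B : bob X) (f f' : gobj (bhom A B)) (θ : garr f f'),
      ru f' ⊙ hc2 θ (gid (id1 A)) = θ ⊙ ru f;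
  ev_nat : forall (A B : bob X) (f f' : gobj (bhom A B)) (θ : garr f f'),
      ev f' ⊙ hc2 (inv2 θ) θ = gid (id1 A) ⊙ ev f;
  co_nat : forall (A B : bob X) (f f' : gobj (bhom A B)) (θ : garr f f'),
      hc2 θ (inv2 θ) ⊙ co f = co f' ⊙ gid (id1 B);
  pentagon : forall (A B C D E : bob X) (k : gobj (bhom D E)) (h : gobj (bhom C D))
      (g : gobj (bhom B C)) (f : gobj (bhom A B)),
      asc k h (hc1 g f) ⊙ asc (hc1 k h) g f
      = hc2 (gid k) (asc h g f) ⊙ asc k (hc1 h g) f ⊙ hc2 (asc k h g) (gid f);
  triangle : forall (A B C : bob X) (g : gobj (bhom B C)) (f : gobj (bhom A B)),
      hc2 (gid g) (lu f) ⊙ asc g (id1 B) f = hc2 (ru g) (gid f);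
  inverse_coh : forall (A B : bob X) (f : gobj (bhom A B)),
      ru f ⊙ hc2 (gid f) (ev f) ⊙ asc f (inv1 f) f ⊙ hc2 (co f) (gid f) = lu f }.

Record Bigroupoid := { bgdata :> BigroupoidData; bgaxioms : IsBigroupoid bgdata }.

Record MorData (X Y : Bigroupoid) := {
  m0 : bob X -> bob Y;
  m1 : forall a a', gobj (bhom a a') -> gobj (bhom (m0 a) (m0 a'));
  m2 : forall a a' (f g : gobj (bhom a a')), garr f g -> garr (m1 f) (m1 g);
  mc : forall a b c (g : gobj (bhom b c)) (f : gobj (bhom a b)),
      garr (hc1 (m1 g) (m1 f)) (m1 (hc1 g f));
  mu : forall a, garr (id1 (m0 a)) (m1 (id1 a));
  mi : forall a b (f : gobj (bhom a b)), garr (inv1 (m1 f)) (m1 (inv1 f)) }.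

Arguments m0 {X Y} _ _.
Arguments m1 {X Y} _ {a a'} _.
Arguments m2 {X Y} _ {a a' f g} _.
Arguments mc {X Y} _ {a b c} g f.
Arguments mu {X Y} _ a.
Arguments mi {X Y} _ {a b} f.

Record IsMorphism (X Y : Bigroupoid) (F : MorData X Y) : Prop := {
  m2_id : forall (a a' : bob X) (f : gobj (bhom a a')), m2 F (gid f) = gid (m1 F f);
  m2_comp : forall (a a' : bob X) (f f' f'' : gobj (bhom a a'))
      (θ : garr f f') (θ' : garr f' f''), m2 F (θ' ⊙ θ) = m2 F θ' ⊙ m2 F θ;
  mc_nat : forall (a b c : bob X) (g g' : gobj (bhom b c)) (f f' : gobj (bhom a b))
      (θ : garr g g') (ψ : garr f f'),
      mc F g' f' ⊙ hc2 (m2 F θ) (m2 F ψ) = m2 F (hc2 θ ψ) ⊙ mc F g f;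
  mi_nat : forall (a b : bob X) (f f' : gobj (bhom a b)) (θ : garr f f'),
      mi F f' ⊙ inv2 (m2 F θ) = m2 F (inv2 θ) ⊙ mi F f;
  m_asc : forall (a b c d : bob X) (h : gobj (bhom c d)) (g : gobj (bhom b c))
      (f : gobj (bhom a b)),
      m2 F (asc h g f) ⊙ mc F (hc1 h g) f ⊙ hc2 (mc F h g) (gid (m1 F f))
      = mc F h (hc1 g f) ⊙ hc2 (gid (m1 F h)) (mc F g f) ⊙ asc (m1 F h) (m1 F g) (m1 F f);
  m_ru : forall (a b : bob X) (f : gobj (bhom a b)),
      m2 F (ru f) ⊙ mc F f (id1 a) ⊙ hc2 (gid (m1 F f)) (mu F a) = ru (m1 F f);
  m_lu : forall (a b : bob X) (f : gobj (bhom a b)),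
      m2 F (lu f) ⊙ mc F (id1 b) f ⊙ hc2 (mu F b) (gid (m1 F f)) = lu (m1 F f);
  m_ev : forall (a b : bob X) (f : gobj (bhom a b)),
      m2 F (ev f) ⊙ mc F (inv1 f) f ⊙ hc2 (mi F f) (gid (m1 F f)) = mu F a ⊙ ev (m1 F f);
  m_co : forall (a b : bob X) (f : gobj (bhom a b)),
      m2 F (co f) ⊙ mu F b
      = mc F f (inv1 f) ⊙ hc2 (gid (m1 F f)) (mi F f) ⊙ co (m1 F f) }.

Definition mcompose (X Y Z : Bigroupoid) (G : MorData Y Z) (F : MorData X Y) : MorData X Z :=
  {| m0 := fun a => m0 G (m0 F a);
     m1 := fun a a' f => m1 G (m1 F f);
     m2 := fun a a' f g θ => m2 G (m2 F θ);
     mc := fun a b c g f => m2 G (mc F g f) ⊙ mc G (m1 F g) (m1 F f);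
     mu := fun a => m2 G (mu F a) ⊙ mu G (m0 F a);
     mi := fun a b f => m2 G (mi F f) ⊙ mi G (m1 F f) |}.

Definition IsFibration (X Y : Bigroupoid) (F : MorData X Y) : Prop :=
  (forall (a' : bob X) (b : bob Y) (g : gobj (bhom b (m0 F a'))),
      exists (a : bob X) (f : gobj (bhom a a')),
        existT (fun x : bob Y => gobj (bhom x (m0 F a'))) (m0 F a) (m1 F f)
        = existT (fun x : bob Y => gobj (bhom x (m0 F a'))) b g) /\
  (forall (a a' : bob X) (f' : gobj (bhom a a')) (g : gobj (bhom (m0 F a) (m0 F a')))
          (β : garr g (m1 F f')),
      exists (f : gobj (bhom a a')) (α : garr f f'),
        existT (fun x : gobj (bhom (m0 F a) (m0 F a')) => garr x (m1 F f')) (m1 F f) (m2 F α)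
        = existT (fun x : gobj (bhom (m0 F a) (m0 F a')) => garr x (m1 F f')) g β).

Definition IsCofibration (X Y : Bigroupoid) (F : MorData X Y) : Prop :=
  (forall a b : bob X, m0 F a = m0 F b -> a = b) /\
  (forall (a a' : bob X) (f g : gobj (bhom a a')), m1 F f = m1 F g -> f = g).

Definition IsWeakEquivalence (X Y : Bigroupoid) (F : MorData X Y) : Prop :=
  (forall b : bob Y, exists a' : bob X, inhabited (gobj (bhom b (m0 F a')))) /\
  (forall a a' : bob X,
      IsEquivOfCats (fun f : gobj (bhom a a') => m1 F f) (fun f g (θ : garr f g) => m2 F θ)).

Definition IsTrivialFibration (X Y : Bigroupoid) (F : MorData X Y) : Prop :=
  IsFibration F /\ IsWeakEquivalence F.

From Stdlib Require Import Classical ClassicalEpsilon FunctionalExtensionality Eqdep.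
Set Implicit Arguments.
Unset Strict Implicit.

(* A 0-cell or 1-cell of D in the image of the cofibration K is sent to the F-image of its
   unique K-preimage; any other one is sent to some G-preimage of its H-image, which exists
   since a trivial fibration is surjective on 0-cells and on 1-cells between given 0-cells.
   As G is locally fully faithful, the 2-cells and structure 2-cells of L are forced to be
   the G-preimages of those of H. Faithfulness of G then gives both the morphism axioms for L
   and the equation L K = F, since each already holds after applying G. *)

Section GroupoidLemmas.
Variable G : Groupoid.

Lemma gcompA (x y z w : gobj G) (h : garr z w) (g : garr y z) (f : garr x y) :
  h ⊙ (g ⊙ f) = (h ⊙ g) ⊙ f.
Proof. apply (gcomp_assoc (gaxioms G)). Qed.

Lemma gcomp1l (x y : gobj G) (f : garr x y) : gid y ⊙ f = f.
Proof. apply (gid_l (gaxioms G)). Qed.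

Lemma gcomp1r (x y : gobj G) (f : garr x y) : f ⊙ gid x = f.
Proof. apply (gid_r (gaxioms G)). Qed.

Lemma gcompVl (x y : gobj G) (f : garr x y) : ginv f ⊙ f = gid x.
Proof. apply (ginv_l (gaxioms G)). Qed.

Lemma gcompVr (x y : gobj G) (f : garr x y) : f ⊙ ginv f = gid y.
Proof. apply (ginv_r (gaxioms G)). Qed.

Lemma gcomp_cancel_l (x y z : gobj G) (e : garr y z) (a b : garr x y) :
  e ⊙ a = e ⊙ b -> a = b.
Proof.
  intro E. rewrite <- (gcomp1l a), <- (gcomp1l b), <- (gcompVl e), <- !gcompA, E.
  reflexivity.
Qed.

Lemma gcomp_cancel_r (x y z : gobj G) (e : garr x y) (a b : garr y z) :
  a ⊙ e = b ⊙ e -> a = b.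
Proof.
  intro E. rewrite <- (gcomp1r a), <- (gcomp1r b), <- (gcompVr e), !gcompA, E.
  reflexivity.
Qed.

Lemma gcomp_tail2 (x y z w : gobj G) (a : garr y z) (b : garr x y) (c : garr x z) :
  a ⊙ b = c -> forall p : garr z w, p ⊙ a ⊙ b = p ⊙ c.
Proof. intros E p. rewrite <- gcompA, E. reflexivity. Qed.

Lemma gcomp_tail3 (x y z u w : gobj G) (a : garr z u) (a' : garr y z)
    (b : garr x y) (c : garr x u) :
  a ⊙ a' ⊙ b = c -> forall p : garr u w, p ⊙ a ⊙ a' ⊙ b = p ⊙ c.
Proof. intros E p. rewrite <- !gcompA, <- E, !gcompA. reflexivity. Qed.

Lemma gcomp_tail4 (x y z u v w : gobj G) (a0 : garr u v) (a : garr z u)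
    (a' : garr y z) (b : garr x y) (c : garr x v) :
  a0 ⊙ a ⊙ a' ⊙ b = c -> forall p : garr v w, p ⊙ a0 ⊙ a ⊙ a' ⊙ b = p ⊙ c.
Proof. intros E p. rewrite <- !gcompA, <- E, !gcompA. reflexivity. Qed.

End GroupoidLemmas.

Section Equivalence.
Variables (G H : Groupoid) (F1 : gobj G -> gobj H).
Variable F2 : forall a b : gobj G, garr a b -> garr (F1 a) (F1 b).
Hypothesis equivF : IsEquivOfCats F1 F2.

Lemma equiv_faithful (a a' : gobj G) (t t' : garr a a') : F2 t = F2 t' -> t = t'.
Proof.
  destruct equivF as [P1 [P2 [_ [_ [eta [eps [eta_nat _]]]]]]].
  intro E. apply (gcomp_cancel_l (e := eta a')).
  rewrite (eta_nat _ _ t), (eta_nat _ _ t'), E. reflexivity.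
Qed.

Lemma equiv_full (a a' : gobj G) (β : garr (F1 a) (F1 a')) : exists t, F2 t = β.
Proof.
  destruct equivF as [P1 [P2 [_ [_ [eta [eps [eta_nat eps_nat]]]]]]].
  set (t := ginv (eta a') ⊙ (P2 _ _ β ⊙ eta a)).
  exists t.
  assert (P2t : P2 _ _ (F2 t) = P2 _ _ β).
  { apply (gcomp_cancel_r (e := eta a)). rewrite <- eta_nat.
    unfold t. rewrite gcompA, gcompVr, gcomp1l. reflexivity. }
  apply (gcomp_cancel_r (e := eps (F1 a))).
  rewrite <- !eps_nat, P2t. reflexivity.
Qed.

Lemma equiv_ess_surj (b : gobj H) : exists a, inhabited (garr b (F1 a)).
Proof.
  destruct equivF as [P1 [_ [_ [_ [_ [eps _]]]]]].
  exists (P1 b). exact (inhabits (ginv (eps b))).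
Qed.

End Equivalence.

Definition LocallyFaithful (X Y : Bigroupoid) (F : MorData X Y) : Prop :=
  forall (a a' : bob X) (f g : gobj (bhom a a')) (t t' : garr f g),
    m2 F t = m2 F t' -> t = t'.

Section TrivialFibration.
Variables (B C : Bigroupoid) (G : MorData B C).
Hypothesis TF : IsTrivialFibration G.

Lemma tf_surj0 (c : bob C) : exists b, m0 G b = c.
Proof.
  destruct TF as [[lift0 _] [ess_surj _]].
  destruct (ess_surj c) as [b' [g]].
  destruct (lift0 b' c g) as [b [f E]].
  exists b. exact (f_equal (@projT1 _ _) E).
Qed.

Lemma tf_faithful : LocallyFaithful G.
Proof.
  destruct TF as [_ [_ local_equiv]].
  intros b b'. exact (equiv_faithful (local_equiv b b')).
Qed.

Lemma tf_full (b b' : bob B) (f g : gobj (bhom b b')) (β : garr (m1 G f) (m1 G g)) :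
  exists t, m2 G t = β.
Proof.
  destruct TF as [_ [_ local_equiv]].
  exact (equiv_full (local_equiv b b') β).
Qed.

Lemma tf_surj1 (b b' : bob B) (u : gobj (bhom (m0 G b) (m0 G b'))) :
  exists f : gobj (bhom b b'), m1 G f = u.
Proof.
  destruct TF as [[_ lift1] [_ local_equiv]].
  destruct (equiv_ess_surj (local_equiv b b') u) as [f' [β]].
  destruct (lift1 b b' f' u β) as [f [α E]].
  exists f. exact (f_equal (@projT1 _ _) E).
Qed.

End TrivialFibration.

Lemma extend_along_injection (X Y : Type) (k : X -> Y) (P : Y -> Type)
    (Q : forall y, P y -> Prop) (f : forall x, P (k x)) :
  (forall x x', k x = k x' -> x = x') ->
  (forall x, Q (k x) (f x)) -> (forall y, exists p, Q y p) ->
  exists l : forall y, P y, (forall x, l (k x) = f x) /\ (forall y, Q y (l y)).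
Proof.
  intros k_inj Qf Q_total.
  assert (ext : forall y, {p : P y | (forall x (e : k x = y), p = eq_rect _ P (f x) _ e) /\ Q y p}).
  { intro y. apply constructive_indefinite_description.
    destruct (classic (exists x, k x = y)) as [[x0 e0] | not_image].
    - exists (eq_rect _ P (f x0) _ e0). split.
      + intros x e. assert (x = x0) by (apply k_inj; congruence). subst x.
        rewrite (proof_irrelevance _ e e0). reflexivity.
      + destruct e0. apply Qf.
    - destruct (Q_total y) as [p Qp]. exists p.
      split; [intros x e; exfalso; eauto | exact Qp]. }
  exists (fun y => proj1_sig (ext y)). split.
  - intro x. exact (proj1 (proj2_sig (ext (k x))) x eq_refl).
  - intro y. exact (proj2 (proj2_sig (ext y))).
Qed.

Definition cells1 (X : Bigroupoid) : Type :=
  {ends : bob X * bob X & gobj (bhom (fst ends) (snd ends))}.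

Definition mcells1 (X Y : Bigroupoid) (F : MorData X Y) (x : cells1 X) : cells1 Y :=
  existT _ (m0 F (fst (projT1 x)), m0 F (snd (projT1 x))) (m1 F (projT2 x)).

Lemma cofibration_mcells1_inj (X Y : Bigroupoid) (K : MorData X Y) :
  IsCofibration K -> forall x x' : cells1 X, mcells1 K x = mcells1 K x' -> x = x'.
Proof.
  intros [inj0 inj1] [[a b] f] [[a' b'] f'] E. unfold mcells1 in E. cbn in *.
  assert (ends : (m0 K a, m0 K b) = (m0 K a', m0 K b')) by exact (f_equal (@projT1 _ _) E).
  injection ends as ea eb. apply inj0 in ea, eb. subst a' b'.
  apply inj_pair2 in E. apply inj1 in E. subst f'. reflexivity.
Qed.

Lemma mcompose_assoc (W X Y Z : Bigroupoid) (H : MorData Y Z) (G : MorData X Y)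
    (F : MorData W X) :
  IsMorphism H -> mcompose H (mcompose G F) = mcompose (mcompose H G) F.
Proof.
  intro HH. unfold mcompose; cbn.
  f_equal; repeat (apply functional_extensionality_dep; intro);
    rewrite (m2_comp HH), gcompA; reflexivity.
Qed.

Section MorDataEquality.
Variables (X Y : Bigroupoid) (F0 : bob X -> bob Y).

Lemma Build_MorData_inj_m1 F1 F1' F2 F2' Fc Fc' Fu Fu' Fi Fi' :
  @Build_MorData X Y F0 F1 F2 Fc Fu Fi = @Build_MorData X Y F0 F1' F2' Fc' Fu' Fi' ->
  F1 = F1'.
Proof.
  intro E. injection E as E1 _ _ _ _. exact (inj_pair2 _ _ _ _ _ E1).
Qed.

Lemma Build_MorData_inj_m2 F1 F2 F2' Fc Fc' Fu Fu' Fi Fi' :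
  @Build_MorData X Y F0 F1 F2 Fc Fu Fi = @Build_MorData X Y F0 F1 F2' Fc' Fu' Fi' ->
  F2 = F2' /\ Fc = Fc' /\ Fu = Fu' /\ Fi = Fi'.
Proof.
  intro E. injection E as E2 Ec Eu Ei.
  apply inj_pair2 in E2, Ec, Eu, Ei. apply inj_pair2 in E2, Ec, Eu, Ei. auto.
Qed.

End MorDataEquality.

Lemma mcompose_faithful_inj (X Y Z : Bigroupoid) (G : MorData Y Z)
    (L0 : bob X -> bob Y) L1 L2 L2' Lc Lc' Lu Lu' Li Li' :
  LocallyFaithful G ->
  mcompose G (@Build_MorData X Y L0 L1 L2 Lc Lu Li)
  = mcompose G (@Build_MorData X Y L0 L1 L2' Lc' Lu' Li') ->
  @Build_MorData X Y L0 L1 L2 Lc Lu Li = @Build_MorData X Y L0 L1 L2' Lc' Lu' Li'.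
Proof.
  intros G_faithful E. apply Build_MorData_inj_m2 in E as [E2 [Ec [Eu Ei]]].
  assert (L2 = L2') as <-.
  { repeat (apply functional_extensionality_dep; intro).
    apply G_faithful. exact (f_equal (fun h => h _ _ _ _ _) E2). }
  assert (Lc = Lc') as <-.
  { repeat (apply functional_extensionality_dep; intro).
    apply G_faithful, (gcomp_cancel_r (e := mc G _ _)).
    exact (f_equal (fun h => h _ _ _ _ _) Ec). }
  assert (Lu = Lu') as <-.
  { apply functional_extensionality_dep; intro.
    apply G_faithful, (gcomp_cancel_r (e := mu G _)).
    exact (f_equal (fun h => h _) Eu). }
  assert (Li = Li') as <-.
  { repeat (apply functional_extensionality_dep; intro).
    apply G_faithful, (gcomp_cancel_r (e := mi G _)).
    exact (f_equal (fun h => h _ _ _) Ei). }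
  reflexivity.
Qed.

Section Whiskering.
Variables (X : Bigroupoid) (a b c : bob X).

Lemma hc2_comp_gidr (g g' g'' : gobj (bhom b c)) (f : gobj (bhom a b))
    (θ' : garr g' g'') (θ : garr g g') :
  hc2 θ' (gid f) ⊙ hc2 θ (gid f) = hc2 (θ' ⊙ θ) (gid f).
Proof. rewrite <- (hc2_comp (bgaxioms X)), gcomp1l. reflexivity. Qed.

Lemma hc2_comp_gidl (g : gobj (bhom b c)) (f f' f'' : gobj (bhom a b))
    (ψ' : garr f' f'') (ψ : garr f f') :
  hc2 (gid g) ψ' ⊙ hc2 (gid g) ψ = hc2 (gid g) (ψ' ⊙ ψ).
Proof. rewrite <- (hc2_comp (bgaxioms X)), gcomp1l. reflexivity. Qed.

End Whiskering.

Ltac assoc_l := repeat rewrite gcompA.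
Ltac assoc_l_in H := repeat rewrite gcompA in H.
(* [rewrite_in_chain E] rewrites with [E : a_1 ⊙ ... ⊙ a_n = c], n <= 4, where the a_i
   occur as the right end of a longer left-associated composite. *)
Ltac rewrite_in_chain E :=
  first [ rewrite (gcomp_tail4 E) | rewrite (gcomp_tail3 E) | rewrite (gcomp_tail2 E) | rewrite E ];
  assoc_l.
Ltac merge_whiskers :=
  repeat first [ rewrite (gcomp_tail2 (hc2_comp_gidr _ _ _)) | rewrite (gcomp_tail2 (hc2_comp_gidl _ _ _))
               | rewrite hc2_comp_gidr | rewrite hc2_comp_gidl ].

Section FaithfulReflection.
Variables (X Y Z : Bigroupoid) (G : MorData Y Z) (L : MorData X Y).
Hypotheses (HG : IsMorphism G) (G_faithful : LocallyFaithful G)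
  (HGL : IsMorphism (mcompose G L)).

Lemma reflect_m2_id (a a' : bob X) (f : gobj (bhom a a')) : m2 L (gid f) = gid (m1 L f).
Proof. apply G_faithful. rewrite (m2_id HG). exact (m2_id HGL f). Qed.

Lemma reflect_m2_comp (a a' : bob X) (f f' f'' : gobj (bhom a a'))
    (θ : garr f f') (θ' : garr f' f'') : m2 L (θ' ⊙ θ) = m2 L θ' ⊙ m2 L θ.
Proof. apply G_faithful. rewrite (m2_comp HG). exact (m2_comp HGL θ θ'). Qed.

Lemma reflect_mc_nat (a b c : bob X) (g g' : gobj (bhom b c)) (f f' : gobj (bhom a b))
    (θ : garr g g') (ψ : garr f f') :
  mc L g' f' ⊙ hc2 (m2 L θ) (m2 L ψ) = m2 L (hc2 θ ψ) ⊙ mc L g f.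
Proof.
  apply G_faithful. rewrite !(m2_comp HG).
  apply (gcomp_cancel_r (e := mc G (m1 L g) (m1 L f))). assoc_l.
  rewrite_in_chain (eq_sym (mc_nat HG (m2 L θ) (m2 L ψ))).
  pose proof (mc_nat HGL θ ψ) as N. cbn in N. assoc_l_in N. exact N.
Qed.

Lemma reflect_mi_nat (a b : bob X) (f f' : gobj (bhom a b)) (θ : garr f f') :
  mi L f' ⊙ inv2 (m2 L θ) = m2 L (inv2 θ) ⊙ mi L f.
Proof.
  apply G_faithful. rewrite !(m2_comp HG).
  apply (gcomp_cancel_r (e := mi G (m1 L f))). assoc_l.
  rewrite_in_chain (eq_sym (mi_nat HG (m2 L θ))).
  pose proof (mi_nat HGL θ) as N. cbn in N. assoc_l_in N. exact N.
Qed.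

Lemma reflect_m_asc (a b c d : bob X) (h : gobj (bhom c d)) (g : gobj (bhom b c))
    (f : gobj (bhom a b)) :
  m2 L (asc h g f) ⊙ mc L (hc1 h g) f ⊙ hc2 (mc L h g) (gid (m1 L f))
  = mc L h (hc1 g f) ⊙ hc2 (gid (m1 L h)) (mc L g f) ⊙ asc (m1 L h) (m1 L g) (m1 L f).
Proof.
  apply G_faithful. rewrite !(m2_comp HG).
  apply (gcomp_cancel_r (e := mc G (hc1 (m1 L h) (m1 L g)) (m1 L f)
                             ⊙ hc2 (mc G (m1 L h) (m1 L g)) (gid (m1 G (m1 L f))))).
  assoc_l.
  pose proof (mc_nat HG (mc L h g) (gid (m1 L f))) as N1. rewrite (m2_id HG) in N1.
  rewrite_in_chain (eq_sym N1). merge_whiskers.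
  pose proof (m_asc HGL h g f) as HA. cbn in HA. assoc_l_in HA. rewrite HA.
  pose proof (m_asc HG (m1 L h) (m1 L g) (m1 L f)) as GA. assoc_l_in GA. rewrite_in_chain GA.
  pose proof (mc_nat HG (gid (m1 L h)) (mc L g f)) as N2. rewrite (m2_id HG) in N2.
  rewrite_in_chain (eq_sym N2). merge_whiskers. reflexivity.
Qed.

Lemma reflect_m_ru (a b : bob X) (f : gobj (bhom a b)) :
  m2 L (ru f) ⊙ mc L f (id1 a) ⊙ hc2 (gid (m1 L f)) (mu L a) = ru (m1 L f).
Proof.
  apply G_faithful. rewrite !(m2_comp HG).
  apply (gcomp_cancel_r (e := mc G (m1 L f) (id1 (m0 L a))
                             ⊙ hc2 (gid (m1 G (m1 L f))) (mu G (m0 L a)))).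
  assoc_l.
  pose proof (mc_nat HG (gid (m1 L f)) (mu L a)) as N. rewrite (m2_id HG) in N.
  rewrite_in_chain (eq_sym N). merge_whiskers.
  pose proof (m_ru HGL f) as HR. cbn in HR. assoc_l_in HR. rewrite HR.
  pose proof (m_ru HG (m1 L f)) as GR. assoc_l_in GR. rewrite GR. reflexivity.
Qed.

Lemma reflect_m_lu (a b : bob X) (f : gobj (bhom a b)) :
  m2 L (lu f) ⊙ mc L (id1 b) f ⊙ hc2 (mu L b) (gid (m1 L f)) = lu (m1 L f).
Proof.
  apply G_faithful. rewrite !(m2_comp HG).
  apply (gcomp_cancel_r (e := mc G (id1 (m0 L b)) (m1 L f)
                             ⊙ hc2 (mu G (m0 L b)) (gid (m1 G (m1 L f))))).
  assoc_l.
  pose proof (mc_nat HG (mu L b) (gid (m1 L f))) as N. rewrite (m2_id HG) in N.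
  rewrite_in_chain (eq_sym N). merge_whiskers.
  pose proof (m_lu HGL f) as HL. cbn in HL. assoc_l_in HL. rewrite HL.
  pose proof (m_lu HG (m1 L f)) as GL. assoc_l_in GL. rewrite GL. reflexivity.
Qed.

Lemma reflect_m_ev (a b : bob X) (f : gobj (bhom a b)) :
  m2 L (ev f) ⊙ mc L (inv1 f) f ⊙ hc2 (mi L f) (gid (m1 L f)) = mu L a ⊙ ev (m1 L f).
Proof.
  apply G_faithful. rewrite !(m2_comp HG).
  apply (gcomp_cancel_r (e := mc G (inv1 (m1 L f)) (m1 L f)
                             ⊙ hc2 (mi G (m1 L f)) (gid (m1 G (m1 L f))))).
  assoc_l.
  pose proof (mc_nat HG (mi L f) (gid (m1 L f))) as N. rewrite (m2_id HG) in N.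
  rewrite_in_chain (eq_sym N). merge_whiskers.
  pose proof (m_ev HGL f) as HE. cbn in HE. assoc_l_in HE. rewrite HE.
  pose proof (m_ev HG (m1 L f)) as GE. assoc_l_in GE. rewrite_in_chain GE. reflexivity.
Qed.

Lemma reflect_m_co (a b : bob X) (f : gobj (bhom a b)) :
  m2 L (co f) ⊙ mu L b = mc L f (inv1 f) ⊙ hc2 (gid (m1 L f)) (mi L f) ⊙ co (m1 L f).
Proof.
  apply G_faithful. rewrite !(m2_comp HG).
  apply (gcomp_cancel_r (e := mu G (m0 L b))). assoc_l.
  pose proof (m_co HGL f) as HC. cbn in HC. assoc_l_in HC. rewrite HC.
  pose proof (m_co HG (m1 L f)) as GC. assoc_l_in GC. rewrite_in_chain GC.
  pose proof (mc_nat HG (gid (m1 L f)) (mi L f)) as N. rewrite (m2_id HG) in N.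
  rewrite_in_chain (eq_sym N). merge_whiskers. reflexivity.
Qed.

Lemma faithful_reflects_morphism : IsMorphism L.
Proof.
  constructor.
  - exact reflect_m2_id.
  - exact reflect_m2_comp.
  - exact reflect_mc_nat.
  - exact reflect_mi_nat.
  - exact reflect_m_asc.
  - exact reflect_m_ru.
  - exact reflect_m_lu.
  - exact reflect_m_ev.
  - exact reflect_m_co.
Qed.

End FaithfulReflection.

Section Lifting.
Variables (B C : Bigroupoid) (G : MorData B C).
Hypothesis TF : IsTrivialFibration G.

Definition tf_preimage2 (b b' : bob B) (f g : gobj (bhom b b'))
    (β : garr (m1 G f) (m1 G g)) : garr f g :=
  proj1_sig (constructive_indefinite_description _ (tf_full TF β)).

Lemma m2_tf_preimage2 (b b' : bob B) (f g : gobj (bhom b b')) (β : garr (m1 G f) (m1 G g)) :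
  m2 G (tf_preimage2 β) = β.
Proof. exact (proj2_sig (constructive_indefinite_description _ (tf_full TF β))). Qed.

Lemma tf_lift_2cells (D : Bigroupoid) (L0 : bob D -> bob B)
    (L1 : forall d d', gobj (bhom d d') -> gobj (bhom (L0 d) (L0 d'))) H2 Hc Hu Hi :
  exists L2 Lc Lu Li,
    mcompose G (@Build_MorData D B L0 L1 L2 Lc Lu Li)
    = @Build_MorData D C (fun d => m0 G (L0 d)) (fun d d' u => m1 G (L1 d d' u))
        H2 Hc Hu Hi.
Proof.
  exists (fun d d' u v β => tf_preimage2 (H2 d d' u v β)),
    (fun d d' d'' g f => tf_preimage2 (Hc d d' d'' g f ⊙ ginv (mc G (L1 _ _ g) (L1 _ _ f)))),
    (fun d => tf_preimage2 (Hu d ⊙ ginv (mu G (L0 d)))),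
    (fun d d' f => tf_preimage2 (Hi d d' f ⊙ ginv (mi G (L1 _ _ f)))).
  unfold mcompose; cbn.
  f_equal; repeat (apply functional_extensionality_dep; intro);
    rewrite m2_tf_preimage2; try reflexivity;
    rewrite <- gcompA, gcompVl, gcomp1r; reflexivity.
Qed.

Variables (A D : Bigroupoid) (K : MorData A D).
Hypothesis K_cofib : IsCofibration K.

Lemma lift_0cells (F0 : bob A -> bob B) (H0 : bob D -> bob C) :
  (forall a, m0 G (F0 a) = H0 (m0 K a)) ->
  exists L0, (fun a => L0 (m0 K a)) = F0 /\ (fun d => m0 G (L0 d)) = H0.
Proof.
  intro square.
  destruct (@extend_along_injection _ _ (m0 K) (fun _ => bob B)
              (fun d b => m0 G b = H0 d) F0 (proj1 K_cofib) square
              (fun d => tf_surj0 TF (H0 d))) as [L0 [LK GL]].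
  exists L0. split; apply functional_extensionality; assumption.
Qed.

Lemma lift_1cells (L0 : bob D -> bob B)
    (F1 : forall a a', gobj (bhom a a') -> gobj (bhom (L0 (m0 K a)) (L0 (m0 K a'))))
    (H1 : forall d d', gobj (bhom d d') -> gobj (bhom (m0 G (L0 d)) (m0 G (L0 d')))) :
  (forall a a' (f : gobj (bhom a a')), m1 G (F1 a a' f) = H1 _ _ (m1 K f)) ->
  exists L1 : forall d d', gobj (bhom d d') -> gobj (bhom (L0 d) (L0 d')),
    (fun a a' f => L1 _ _ (m1 K f)) = F1 /\ (fun d d' u => m1 G (L1 d d' u)) = H1.
Proof.
  intro square.
  destruct (@extend_along_injection _ _ (mcells1 K)
              (fun y : cells1 D => gobj (bhom (L0 (fst (projT1 y))) (L0 (snd (projT1 y)))))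
              (fun y v => m1 G v = H1 _ _ (projT2 y))
              (fun x => F1 _ _ (projT2 x))
              (cofibration_mcells1_inj K_cofib) (fun x => square _ _ (projT2 x))
              (fun y => tf_surj1 TF (H1 _ _ (projT2 y)))) as [l [lK Gl]].
  exists (fun d d' u => l (existT _ (d, d') u)).
  split; repeat (apply functional_extensionality_dep; intro).
  - exact (lK (existT _ (_, _) _)).
  - exact (Gl (existT _ (_, _) _)).
Qed.

End Lifting.

Theorem lemma4p2 (A B C D : Bigroupoid)
  (F : MorData A B) (K : MorData A D) (G : MorData B C) (H : MorData D C) :
  IsMorphism F -> IsMorphism K -> IsMorphism G -> IsMorphism H ->
  mcompose G F = mcompose H K ->
  IsCofibration K -> IsTrivialFibration G ->
  exists L : MorData D B,
    IsMorphism L /\ mcompose L K = F /\ mcompose G L = H.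
Proof.
  intros _ _ HG HH E K_cofib TF.
  destruct F as [F0 F1 F2 Fc Fu Fi], H as [H0 H1 H2 Hc Hu Hi].
  destruct (lift_0cells TF K_cofib (fun a => f_equal (fun M => m0 M a) E))
    as [L0 [eF0 eH0]]; cbn in eF0, eH0; subst F0 H0.
  pose proof (Build_MorData_inj_m1 E) as E1.
  destruct (lift_1cells TF K_cofib (fun a a' f => f_equal (fun h => h a a' f) E1))
    as [L1 [eF1 eH1]]; cbn in eF1, eH1; subst F1 H1.
  destruct (tf_lift_2cells TF H2 Hc Hu Hi) as [L2 [Lc [Lu [Li GL]]]].
  exists {| m0 := L0; m1 := L1; m2 := L2; mc := Lc; mu := Lu; mi := Li |}.
  split; [| split; [| exact GL]].
  - apply (faithful_reflects_morphism HG (tf_faithful TF)). rewrite GL. exact HH.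
  - rewrite <- GL, <- (mcompose_assoc _ _ HG) in E.
    apply (mcompose_faithful_inj (tf_faithful TF)). exact (eq_sym E).
Qed.
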